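(* Let $\varepsilon,\delta,p$ be positive constants with $\varepsilon<1/2$. Let $(V_1,V_2,V_3)$ be a triple of pairwise disjoint vertex sets in a graph such that for all $i,j$ the density of $(V_i,V_j)$ is $d_{ij}p$ with $d_{ij}\ge\delta$. Then for every $\varepsilon$-typical vertex $v\in V_1$ there exist sets $N_j''\subset N(v)\cap V_j$ for $j\in\{2,3\}$ such that (i) there are at least $(1-6\varepsilon-2\varepsilon/\delta)d_{12}d_{13}d_{23}p^3|V_2||V_3|$ edges between $N_2''$ and $N_3''$, and if $v$ is $\varepsilon$-good, then at least that many of the edges between $N_2''$ and $N_3''$ are $\varepsilon$-good; (ii) for all $j,k$ with $\{j,k\}=\{2,3\}$, no vertex of $N_j''$ has more than $(1+2\varepsilon/\delta)(1+\varepsilon)^2d_{1k}d_{23}p^2|V_k|$ neighbours in $N_k''$.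
   Context: For disjoint $X,Y$, $d(X,Y)=e(X,Y)/(|X||Y|)$; $x=(1\pm a)y$ means $x\in[(1-a)y,(1+a)y]$. A pair $(X,Y)$ is $(\varepsilon,p)$-regular if $|d(X,Y)-d(X',Y')|\le\varepsilon p$ for all $X'\subset X,Y'\subset Y$ with $|X'|\ge\varepsilon|X|,|Y'|\ge\varepsilon|Y|$. A vertex $v\in V_1$ is $\varepsilon$-typical if for $j\in\{2,3\}$, $N_j=N(v)\cap V_j$ satisfies $|N_j|=(1\pm\varepsilon)d_{1j}p|V_j|$, and there exist $N_j'\subset N_j$ with $|N_j'|\ge(1-\varepsilon)|N_j|$ such that $(N_2',N_3')$ is $(\varepsilon,p)$-regular with density $(1\pm\varepsilon)d_{23}p$. An edge between $V_2$ and $V_3$ is $\varepsilon$-good if its endpoints have at least $(1-\varepsilon)d_{12}d_{13}p^2|V_1|$ common neighbours in $V_1$. An $\varepsilon$-typical vertex $v\in V_1$ is $\varepsilon$-good if at most $\varepsilon d_{12}d_{13}d_{23}p^3|V_2||V_3|$ edges between $N(v)\cap V_2$ and $N(v)\cap V_3$ are not $\varepsilon$-good. *)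

From HB Require Import structures.
From mathcomp Require Import all_boot all_order all_algebra.
Set Implicit Arguments. Unset Strict Implicit. Unset Printing Implicit Defensive.
Import Order.TTheory GRing.Theory Num.Theory.
Local Open Scope ring_scope.

Section Defs.
Variables (R : realFieldType) (T : finType) (e : rel T).

Definition nbhd (v : T) : {set T} := [set u | e v u].

(* e(X,Y): number of pairs (x,y) in X x Y that are adjacent
   (= number of edges between X and Y when X, Y are disjoint) *)
Definition edges_between (X Y : {set T}) : nat :=
  #|[set xy in setX X Y | e xy.1 xy.2]|.

Definition density (X Y : {set T}) : R :=
  (edges_between X Y)%:R / (#|X| * #|Y|)%:R.

Definition approx (x a y : R) : Prop := (1 - a) * y <= x <= (1 + a) * y.

Definition regular_pair (eps p : R) (X Y : {set T}) : Prop :=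
  forall X' Y' : {set T}, X' \subset X -> Y' \subset Y ->
    eps * #|X|%:R <= #|X'|%:R -> eps * #|Y|%:R <= #|Y'|%:R ->
    `|density X Y - density X' Y'| <= eps * p.

Definition typical (eps p d12 d13 d23 : R) (V2 V3 : {set T}) (v : T) : Prop :=
  let N2 := nbhd v :&: V2 in
  let N3 := nbhd v :&: V3 in
  approx #|N2|%:R eps (d12 * p * #|V2|%:R) /\
  approx #|N3|%:R eps (d13 * p * #|V3|%:R) /\
  exists N2' N3' : {set T},
    [/\ N2' \subset N2, N3' \subset N3,
        (1 - eps) * #|N2|%:R <= #|N2'|%:R,
        (1 - eps) * #|N3|%:R <= #|N3'|%:R &
        regular_pair eps p N2' N3' /\
        approx (density N2' N3') eps (d23 * p)].

Definition good_edge (eps p d12 d13 : R) (V1 V2 V3 : {set T}) (x y : T) : bool :=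
  [&& x \in V2, y \in V3, e x y &
      (1 - eps) * d12 * d13 * p ^+ 2 * #|V1|%:R <= #|nbhd x :&: nbhd y :&: V1|%:R].

Definition good_edges_between (eps p d12 d13 : R) (V1 V2 V3 X Y : {set T}) : nat :=
  #|[set xy in setX X Y | e xy.1 xy.2 && good_edge eps p d12 d13 V1 V2 V3 xy.1 xy.2]|.

Definition good_vertex (eps p d12 d13 d23 : R) (V1 V2 V3 : {set T}) (v : T) : Prop :=
  typical eps p d12 d13 d23 V2 V3 v /\
  #|[set xy in setX (nbhd v :&: V2) (nbhd v :&: V3) |
      e xy.1 xy.2 && ~~ good_edge eps p d12 d13 V1 V2 V3 xy.1 xy.2]|%:R
    <= eps * d12 * d13 * d23 * p ^+ 3 * #|V2|%:R * #|V3|%:R.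

End Defs.
Arguments density {R T} e X Y.
Arguments approx {R} x a y.
Arguments regular_pair {R T} e eps p X Y.
Arguments typical {R T} e eps p d12 d13 d23 V2 V3 v.
Arguments good_edge {R T} e eps p d12 d13 V1 V2 V3 x y.
Arguments good_edges_between {R T} e eps p d12 d13 V1 V2 V3 X Y.
Arguments good_vertex {R T} e eps p d12 d13 d23 V1 V2 V3 v.

(* Delete from N2' (resp. N3') the vertices with more than tau2 (resp. tau3)
   neighbours on the other side, where tau = (1 + 2 eps/delta)(1 + eps)^2 d23 p^2 |V|
   exceeds (D + eps p) times the other side; (ii) then holds by construction.  By
   regularity fewer than eps |N2'| vertices are deleted, and padding the deleted set
   B with vertices of ordinary degree up to the regularity threshold shows that B
   carries at most |B| (D + eps p) |N3'| + 2 eps^2 p |N2'| |N3'| edges.  Comparing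
   with the lower bound |B| tau2, the edges lost on both sides are, in units of
   d23 p A2 A3 (A_j = d1j p |V_j|), at most 2 eps / delta plus the slack between
   D |N2'| |N3'| and (1 - eps)^5 d23 p A2 A3 >= (1 - 5 eps) d23 p A2 A3; this is an
   elementary but delicate inequality, needed only for eps <= 1/5 since otherwise
   the claimed bound is negative.  Finally at most eps d23 p A2 A3 of the remaining
   edges are not good when v is good. *)

From HB Require Import structures.
From mathcomp Require Import all_boot all_order all_algebra.
From mathcomp Require Import ring lra zify.
Import Order.TTheory GRing.Theory Num.Theory.
Set Implicit Arguments. Unset Strict Implicit. Unset Printing Implicit Defensive.
Local Open Scope ring_scope.

Lemma ler_eq (R : numDomainType) (x y : R) : x = y -> x <= y.
Proof. by move->. Qed.

Section SmallEpsilon.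
Variable R : realFieldType.
Implicit Types e : R.

(* [mass_lb e] is the least value of a product [L * u] of a normalized density
   [L >= (1-e)/(1+e)] and a normalized part size [u >= (1-e)^2/(1+e)]. *)
Definition mass_lb e : R := (1 - e) ^+ 3 / (1 + e) ^+ 2.

Definition bernoulli_gap e : R := ((1 - e) ^+ 5 - (1 - 5 * e)) / 2.

Lemma one_sub_mass_lbE e : 0 < e ->
  1 - mass_lb e = ((1 + e) ^+ 2 - (1 - e) ^+ 3) / (1 + e) ^+ 2.
Proof. by move=> e_gt0; rewrite /mass_lb; field; lra. Qed.

Lemma mass_gap_ge e : 0 < e -> e <= 1/5 -> 2 * e * (1 + e) ^+ 2 <= 1 - mass_lb e.
Proof.
move=> e_gt0 e_le; rewrite one_sub_mass_lbE // ler_pdivlMr; first nra.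
by apply: exprn_gt0; lra.
Qed.

Lemma mass_gap_ge_mixed e : 0 < e -> e <= 1/5 ->
  2 * e + e * (1 + e) ^+ 2 * (1 - 2 * e) <= 1 - mass_lb e.
Proof.
move=> e_gt0 e_le; rewrite one_sub_mass_lbE // ler_pdivlMr; first nra.
by apply: exprn_gt0; lra.
Qed.

Lemma growth_le_ratio e : 0 < e -> e <= 1/5 ->
  4 * e * (1 + e) ^+ 2 <= (1 + 2 * e) / (1 + e).
Proof. by move=> e_gt0 e_le; rewrite ler_pdivlMr; nra. Qed.

Lemma growth_le1 e : 0 < e -> e <= 1/5 -> 3 * e * (1 + e) ^+ 2 <= 1.
Proof. by move=> e_gt0 e_le; nra. Qed.

Lemma bernoulli_gap_ge0 e : 0 < e -> e <= 1/5 -> 0 <= bernoulli_gap e.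
Proof. by move=> e_gt0 e_le; rewrite /bernoulli_gap; nra. Qed.

End SmallEpsilon.

Section OneSideLoss.
Variable R : realFieldType.

(* The right-hand side is concave in [t]: twice [e] times it equals the convex
   combination of its values at [t = 0] and [t = 2 e] plus [e s t (2e - t) >= 0],
   so it suffices to check both endpoints. *)
Lemma concave_interpolation_bound (e s g k r t E : R) :
  0 < e -> e <= 1/5 -> 0 <= r -> 0 <= t -> t <= 2 * e -> 0 <= E ->
  2 * e * (1 + e) ^+ 2 <= g -> 4 * e * (1 + e) ^+ 2 <= k ->
  2 * e + e * (1 + e) ^+ 2 * (1 - 2 * e) <= g ->
  k * s = (1 + 2 * e) * (1 + e) ^+ 2 -> 0 <= s ->
  2 * e * (1 + e) ^+ 2 * r * (1 + 2 * r) <= (g - t + r * k) * (r + s * t / 2 + E).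
Proof.
move=> e_gt0 e_le r_ge0 t_ge0 t_le E_ge0 g_ge k_ge g_ge_mixed ks s_ge0.
set lhs := 2 * e * (1 + e) ^+ 2 * r * (1 + 2 * r).
have growth_ge0 : 0 <= 2 * e * (1 + e) ^+ 2 by apply: mulr_ge0; [lra | apply: sqr_ge0].
have k_ge0 : 0 <= k by nra.
have rk_ge0 : 0 <= r * k by apply: mulr_ge0.
have at_t0 : lhs <= (g + r * k) * (r + E).
  have h1 : 0 <= (g + r * k) * E by apply: mulr_ge0 => //; lra.
  have h2 : 0 <= (g - 2 * e * (1 + e) ^+ 2) * r by apply: mulr_ge0; lra.
  have h3 : 0 <= (k - 4 * e * (1 + e) ^+ 2) * (r * r) by apply: mulr_ge0; [lra | nra].
  rewrite /lhs; nra.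
have at_t2e : lhs <= (g - 2 * e + r * k) * (r + s * e + E).
  have g_ge2e : 0 <= g - 2 * e.
    have : 0 <= e * (1 + e) ^+ 2 * (1 - 2 * e).
      by apply: mulr_ge0; [apply: mulr_ge0; [lra | apply: sqr_ge0] | lra].
    lra.
  have h1 : 0 <= (g - 2 * e + r * k) * E by apply: mulr_ge0 => //; lra.
  have h1' : 0 <= (g - 2 * e) * (s * e) by apply: mulr_ge0 => //; apply: mulr_ge0 => //; lra.
  have h2 : 0 <= (g - 2 * e - e * (1 + e) ^+ 2 * (1 - 2 * e)) * r by apply: mulr_ge0; lra.
  have h3 : 0 <= (k - 4 * e * (1 + e) ^+ 2) * (r * r) by apply: mulr_ge0; [lra | nra].
  have rks : r * k * (s * e) = r * ((1 + 2 * e) * (1 + e) ^+ 2) * e by rewrite -ks; ring.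
  rewrite /lhs; nra.
have interpolation : 2 * e * ((g - t + r * k) * (r + s * t / 2 + E)) =
    (2 * e - t) * ((g + r * k) * (r + E)) + t * ((g - 2 * e + r * k) * (r + s * e + E))
    + e * s * t * (2 * e - t) by field.
suff : 2 * e * lhs <= 2 * e * ((g - t + r * k) * (r + s * t / 2 + E)).
  by rewrite ler_pM2l //; lra.
rewrite interpolation.
have a1 : (2 * e - t) * lhs <= (2 * e - t) * ((g + r * k) * (r + E)) by apply: ler_wpM2l; lra.
have a2 : t * lhs <= t * ((g - 2 * e + r * k) * (r + s * e + E)) by apply: ler_wpM2l.
have a3 : 0 <= e * s * t * (2 * e - t).
  by apply: mulr_ge0; [apply: mulr_ge0; [nra |] |]; lra.
lra.
Qed.

Lemma mass_lb_le (e L u : R) : 0 < e -> e <= 1 ->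
  (1 - e) / (1 + e) <= L -> (1 - e) ^+ 2 / (1 + e) <= u -> mass_lb e <= L * u.
Proof.
move=> e_gt0 e_le1 L_ge u_ge.
have -> : mass_lb e = (1 - e) / (1 + e) * ((1 - e) ^+ 2 / (1 + e)).
  by rewrite /mass_lb; field; lra.
by apply: ler_pM => //; apply: divr_ge0; rewrite ?sqr_ge0; lra.
Qed.

Lemma one_side_loss_dense (e r r' L u x : R) :
  0 < e -> e <= 1/5 -> 0 <= r -> r * (1 + e) <= r' ->
  0 <= L -> L <= 1 -> 0 <= u -> u <= 1 -> 0 <= x -> x <= e ->
  mass_lb e + 2 * e <= L * u ->
  (1 + e) ^+ 3 * (x * (u * (L + r)) + 2 * e * r * u)
    <= r' + (1 + e) ^+ 3 * (L * u - mass_lb e) / 2 + bernoulli_gap e.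
Proof.
move=> e_gt0 e_le r_ge0 rr' L_ge0 L_le1 u_ge0 u_le1 x_ge0 x_le dense.
set s := (1 + e) ^+ 3.
have s_gt0 : 0 < s by apply: exprn_gt0; lra.
have gap_ge0 := bernoulli_gap_ge0 e_gt0 e_le.
have h1 : x * (u * (L + r)) <= e * (L * u + r).
  have ur : u * r <= 1 * r by apply: ler_wpM2r.
  apply: le_trans (_ : e * (u * (L + r)) <= _); first by apply: ler_wpM2r; nra.
  by apply: ler_wpM2l; lra.
have h2 : 2 * e * r * u <= 2 * e * r * 1.
  by apply: ler_wpM2l => //; apply: mulr_ge0 => //; lra.
have h3 : s * (e * (L * u)) <= s * (L * u - mass_lb e) / 2.
  have : e * (L * u) <= e * 1 by apply: ler_wpM2l; nra.
  rewrite mulr1 -mulrA => Lu_le.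
  by apply: ler_wpM2l; lra.
have h4 : 3 * e * (s * r) <= r'.
  have sr : s * r = (1 + e) ^+ 2 * (r * (1 + e)) by rewrite /s exprS; ring.
  have r'_ge0 : 0 <= r' by nra.
  have h : (1 + e) ^+ 2 * (r * (1 + e)) <= (1 + e) ^+ 2 * r'.
    by apply: ler_wpM2l => //; apply: sqr_ge0.
  rewrite sr; apply: le_trans (ler_wpM2l (_ : 0 <= 3 * e) h) _; first lra.
  rewrite mulrA -[leRHS]mul1r; apply: ler_wpM2r => //; exact: growth_le1.
have h5 : s * (x * (u * (L + r)) + 2 * e * r * u) <= s * (e * (L * u)) + 3 * e * (s * r).
  have -> : s * (e * (L * u)) + 3 * e * (s * r) = s * (e * (L * u) + 3 * e * r) by ring.
  by apply: ler_wpM2l; lra.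
lra.
Qed.

Lemma one_side_loss_sparse (e r r' L u x : R) :
  0 < e -> e <= 1/5 -> 0 <= r -> r * (1 + e) <= r' ->
  0 <= L -> 0 <= u -> u <= 1 -> 0 <= x ->
  mass_lb e <= L * u -> L * u < mass_lb e + 2 * e ->
  x * (1 + 2 * r') <= u * (x * (L + r) + 2 * e * r) ->
  (1 + e) ^+ 3 * (x * (u * (L + r)) + 2 * e * r * u)
    <= r' + (1 + e) ^+ 3 * (L * u - mass_lb e) / 2 + bernoulli_gap e.
Proof.
move=> e_gt0 e_le r_ge0 rr' L_ge0 u_ge0 u_le1 x_ge0 Lu_ge Lu_lt x_le.
set s := (1 + e) ^+ 3; set T := r' + s * (L * u - mass_lb e) / 2 + bernoulli_gap e.
set c := 1 + 2 * r'; set a := u * (L + r).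
set g := 1 - L * u + r' * ((1 + 2 * e) / (1 + e)).
have s_gt0 : 0 < s by apply: exprn_gt0; lra.
have r'_ge0 : 0 <= r' by nra.
have a_ge0 : 0 <= a by apply: mulr_ge0; lra.
have ur : u * r <= 1 * r by apply: ler_wpM2r.
have g_le : g <= c - a.
  have r_le : r <= r' / (1 + e) by rewrite ler_pdivlMr //; lra.
  have r'_split : r' * ((1 + 2 * e) / (1 + e)) = 2 * r' - r' / (1 + e) by field; lra.
  rewrite /g /a /c r'_split; nra.
have g_gt0 : 0 < g.
  have : 0 <= r' * ((1 + 2 * e) / (1 + e)) by apply: mulr_ge0 => //; apply: divr_ge0; lra.
  have := mass_gap_ge e_gt0 e_le.
  rewrite /g; nra.
(* Solving [x_le] for [x] bounds the loss by [2 s e r u c / (c - a)]. *)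
have k1 : s * (x * a + 2 * e * r * u) * (c - a) <= 2 * s * e * r * u * c.
  have h : x * (c - a) * a <= 2 * e * r * u * a by apply: ler_wpM2r => //; rewrite /c /a; lra.
  have -> : 2 * s * e * r * u * c = s * (2 * e * r * u * a) + s * (2 * e * r * u * (c - a)).
    by ring.
  have -> : s * (x * a + 2 * e * r * u) * (c - a)
          = s * (x * (c - a) * a) + s * (2 * e * r * u * (c - a)) by ring.
  by rewrite lerD2r; apply: ler_wpM2l => //; lra.
have k2 : 2 * s * e * r * u * c <= 2 * e * (1 + e) ^+ 2 * r' * c.
  have sr : s * r * u <= (1 + e) ^+ 2 * r'.
    have -> : s * r * u = (1 + e) ^+ 2 * (r * (1 + e) * u) by rewrite /s exprS; ring.
    apply: ler_wpM2l; first exact: sqr_ge0.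
    by apply: le_trans rr'; rewrite -[leRHS]mulr1; apply: ler_wpM2l => //; nra.
  have -> : 2 * s * e * r * u * c = 2 * e * c * (s * r * u) by ring.
  have -> : 2 * e * (1 + e) ^+ 2 * r' * c = 2 * e * c * ((1 + e) ^+ 2 * r') by ring.
  by apply: ler_wpM2l => //; apply: mulr_ge0; rewrite /c; lra.
have k3 : 2 * e * (1 + e) ^+ 2 * r' * c <= g * T.
  have ks : (1 + 2 * e) / (1 + e) * s = (1 + 2 * e) * (1 + e) ^+ 2 by rewrite /s; field; lra.
  have t_ge0 : 0 <= L * u - mass_lb e by lra.
  have t_le : L * u - mass_lb e <= 2 * e by lra.
  have := concave_interpolation_bound e_gt0 e_le r'_ge0 t_ge0 t_le
    (bernoulli_gap_ge0 e_gt0 e_le) (mass_gap_ge e_gt0 e_le) (growth_le_ratio e_gt0 e_le)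
    (mass_gap_ge_mixed e_gt0 e_le) ks (ltW s_gt0).
  by move/le_trans; apply; apply: ler_eq; rewrite /c /g /T; ring.
have T_ge0 : 0 <= T.
  have : 0 <= s * (L * u - mass_lb e) by apply: mulr_ge0; lra.
  have := bernoulli_gap_ge0 e_gt0 e_le.
  rewrite /T; lra.
have : s * (x * a + 2 * e * r * u) * (c - a) <= T * (c - a).
  apply: le_trans k1 (le_trans k2 (le_trans k3 _)).
  by rewrite mulrC; apply: ler_wpM2l.
by rewrite ler_pM2r //; lra.
Qed.

End OneSideLoss.

Section CleaningLoss.
Variable R : realFieldType.

(* Normalized form of the loss on one side: [L], [u] and [w] are the density and
   the two part sizes divided by their largest possible values (1+e) d23 p,
   (1+e) A3 and (1+e) A2; [x] is the fraction of vertices deleted, [l] the number of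
   edges lost with them in units of (1+e)^3 d23 p A2 A3, [r] = e / ((1+e) d23) and
   [r'] = e / delta. *)
Lemma one_side_loss (e r r' L u w x l : R) :
  0 < e -> e <= 1/5 -> 0 <= r -> r * (1 + e) <= r' ->
  (1 - e) / (1 + e) <= L -> L <= 1 -> (1 - e) ^+ 2 / (1 + e) <= u -> u <= 1 ->
  0 < w -> w <= 1 -> 0 <= x -> x <= e ->
  x * (1 + 2 * r') * w <= l -> l <= w * u * (x * (L + r) + 2 * e * r) ->
  (1 + e) ^+ 3 * l <= r' + (1 + e) ^+ 3 * w * (L * u - mass_lb e) / 2 + bernoulli_gap e.
Proof.
move=> e_gt0 e_le r_ge0 rr' L_ge L_le1 u_ge u_le1 w_gt0 w_le1 x_ge0 x_le l_ge l_le.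
set s := (1 + e) ^+ 3; set T := r' + s * (L * u - mass_lb e) / 2 + bernoulli_gap e.
have s_gt0 : 0 < s by apply: exprn_gt0; lra.
have L_ge0 : 0 <= L by apply: le_trans L_ge; apply: divr_ge0; lra.
have u_ge0 : 0 <= u by apply: le_trans u_ge; apply: divr_ge0; [apply: sqr_ge0 | lra].
have Lu_ge : mass_lb e <= L * u by apply: mass_lb_le => //; lra.
have r'_ge0 : 0 <= r' by nra.
have gap_ge0 := bernoulli_gap_ge0 e_gt0 e_le.
have core : s * (x * (u * (L + r)) + 2 * e * r * u) <= T.
  have [dense | sparse] := lerP (mass_lb e + 2 * e) (L * u).
    exact: one_side_loss_dense.
  apply: one_side_loss_sparse => //.
  suff : x * (1 + 2 * r') * w <= u * (x * (L + r) + 2 * e * r) * w by rewrite ler_pM2r.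
  by apply: le_trans l_ge (le_trans l_le (ler_eq _)); ring.
have : s * l <= w * T.
  apply: le_trans (_ : s * (w * (x * (u * (L + r)) + 2 * e * r * u)) <= _).
    apply: ler_wpM2l; first lra.
    by apply: le_trans l_le (ler_eq _); ring.
  by rewrite mulrCA; apply: ler_wpM2l => //; lra.
have wr' : w * r' <= r' by rewrite -[leRHS]mul1r; apply: ler_wpM2r.
have wgap : w * bernoulli_gap e <= bernoulli_gap e by rewrite -[leRHS]mul1r; apply: ler_wpM2r.
have -> : w * T = w * r' + s * w * (L * u - mass_lb e) / 2 + w * bernoulli_gap e.
  by rewrite /T; ring.
lra.
Qed.

Lemma two_side_loss (e r' L u w l2 l3 : R) : 0 < e -> e <= 1/5 ->
  (1 - e) ^+ 2 / (1 + e) <= u -> (1 - e) ^+ 2 / (1 + e) <= w ->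
  (1 + e) ^+ 3 * l2 <= r' + (1 + e) ^+ 3 * w * (L * u - mass_lb e) / 2 + bernoulli_gap e ->
  (1 + e) ^+ 3 * l3 <= r' + (1 + e) ^+ 3 * u * (L * w - mass_lb e) / 2 + bernoulli_gap e ->
  1 - 5 * e - 2 * r' <= (1 + e) ^+ 3 * (L * w * u - l2 - l3).
Proof.
move=> e_gt0 e_le u_ge w_ge loss2 loss3.
set s := (1 + e) ^+ 3.
have mass_lb_avg_ge : (1 - e) ^+ 5 <= s * mass_lb e * (w + u) / 2.
  have -> : s * mass_lb e * (w + u) / 2 = (1 + e) * (1 - e) ^+ 3 * ((w + u) / 2).
    by rewrite /s /mass_lb; field; lra.
  have -> : (1 - e) ^+ 5 = (1 + e) * (1 - e) ^+ 3 * ((1 - e) ^+ 2 / (1 + e)) by field; lra.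
  by apply: ler_wpM2l; [apply: mulr_ge0; [lra | apply: exprn_ge0; lra] | lra].
have split_mass : s * w * (L * u - mass_lb e) / 2 + s * u * (L * w - mass_lb e) / 2
    = s * (L * w * u) - s * mass_lb e * (w + u) / 2 by field.
have -> : s * (L * w * u - l2 - l3) = s * (L * w * u) - s * l2 - s * l3 by ring.
move: mass_lb_avg_ge split_mass loss2 loss3; rewrite /bernoulli_gap -/s.
set P := (1 - e) ^+ 5; set W := s * mass_lb e * (w + u) / 2.
set X2 := s * w * _ / 2; set X3 := s * u * _ / 2; set M := s * (L * w * u).
lra.
Qed.

Definition scaled (e A n : R) : R := n / ((1 + e) * A).

Lemma scaled_bounds (e A c n : R) : 0 < e -> 0 < A ->
  c * A <= n -> n <= (1 + e) * A -> c / (1 + e) <= scaled e A n <= 1.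
Proof.
move=> e_gt0 A_gt0 n_ge n_le; have eA_gt0 : 0 < (1 + e) * A by apply: mulr_gt0; lra.
apply/andP; split; last by rewrite /scaled ler_pdivrMr // mul1r.
have -> : c / (1 + e) = c * A / ((1 + e) * A) by field; apply/andP; split; lra.
by rewrite ler_pM2r // invr_gt0.
Qed.

Lemma one_side_loss_unscaled (e dl p d23 An Am n m D k lo : R) :
  0 < e -> e <= 1/5 -> 0 < dl -> dl <= d23 -> 0 < p -> 0 < An -> 0 < Am ->
  (1 - e) ^+ 2 * An <= n -> n <= (1 + e) * An ->
  (1 - e) ^+ 2 * Am <= m -> m <= (1 + e) * Am ->
  (1 - e) * (d23 * p) <= D -> D <= (1 + e) * (d23 * p) ->
  0 <= k -> k <= e * n ->
  k * ((1 + 2 * e / dl) * (1 + e) ^+ 2 * d23 * p * Am) <= lo ->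
  lo <= k * (D + e * p) * m + 2 * e * (e * p) * n * m ->
  (1 + e) ^+ 3 * (lo / ((1 + e) ^+ 3 * d23 * p * (An * Am)))
    <= e / dl + (1 + e) ^+ 3 * scaled e An n
                * (scaled e (d23 * p) D * scaled e Am m - mass_lb e) / 2
       + bernoulli_gap e.
Proof.
move=> e_gt0 e_le dl_gt0 dl_le p_gt0 An_gt0 Am_gt0 n_ge n_le m_ge m_le D_ge D_le
  k_ge0 k_le lo_ge lo_le.
have d23_gt0 : 0 < d23 by lra.
have n_gt0 : 0 < n by apply: lt_le_trans n_ge; apply: mulr_gt0 => //; apply: exprn_gt0; lra.
have /andP[w_ge w_le1] := scaled_bounds e_gt0 An_gt0 n_ge n_le.
have /andP[u_ge u_le1] := scaled_bounds e_gt0 Am_gt0 m_ge m_le.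
have /andP[L_ge L_le1] := scaled_bounds e_gt0 (mulr_gt0 d23_gt0 p_gt0) D_ge D_le.
have w_gt0 : 0 < scaled e An n by rewrite /scaled divr_gt0 // mulr_gt0 //; lra.
set r := e / ((1 + e) * d23).
have r_ge0 : 0 <= r by apply: divr_ge0; [lra | apply: mulr_ge0; lra].
have rr' : r * (1 + e) <= e / dl.
  have -> : r * (1 + e) = e / d23 by rewrite /r; field; apply/andP; split; lra.
  by rewrite ler_pdivrMr // mulrAC ler_pdivlMr //; apply: ler_wpM2l; lra.
set U := (1 + e) ^+ 3 * d23 * p * (An * Am).
have Uinv_ge0 : 0 <= U^-1.
  by rewrite invr_ge0 /U; apply: mulr_ge0; [apply: mulr_ge0 | apply: mulr_ge0]; nra.
apply: (one_side_loss (r := r) (x := k / n)) => //.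
- by rewrite divr_ge0 // ltW.
- by rewrite ler_pdivrMr.
- have -> : k / n * (1 + 2 * (e / dl)) * scaled e An n
      = k * ((1 + 2 * e / dl) * (1 + e) ^+ 2 * d23 * p * Am) / U.
    by rewrite /scaled /U; field; rewrite !gt_eqF //; lra.
  exact: ler_wpM2r.
- have -> : scaled e An n * scaled e Am m * (k / n * (scaled e (d23 * p) D + r) + 2 * e * r)
      = (k * (D + e * p) * m + 2 * e * (e * p) * n * m) / U.
    by rewrite /scaled /U /r; field; rewrite !gt_eqF //; lra.
  exact: ler_wpM2r.
Qed.

Lemma cleaning_loss_le (e dl p d23 A2 A3 n m D k2 lo2 k3 lo3 : R) :
  0 < e -> e <= 1/5 -> 0 < dl -> dl <= d23 -> 0 < p -> 0 < A2 -> 0 < A3 ->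
  (1 - e) ^+ 2 * A2 <= n -> n <= (1 + e) * A2 ->
  (1 - e) ^+ 2 * A3 <= m -> m <= (1 + e) * A3 ->
  (1 - e) * (d23 * p) <= D -> D <= (1 + e) * (d23 * p) ->
  0 <= k2 -> k2 <= e * n ->
  k2 * ((1 + 2 * e / dl) * (1 + e) ^+ 2 * d23 * p * A3) <= lo2 ->
  lo2 <= k2 * (D + e * p) * m + 2 * e * (e * p) * n * m ->
  0 <= k3 -> k3 <= e * m ->
  k3 * ((1 + 2 * e / dl) * (1 + e) ^+ 2 * d23 * p * A2) <= lo3 ->
  lo3 <= k3 * (D + e * p) * n + 2 * e * (e * p) * n * m ->
  (1 - 5 * e - 2 * e / dl) * (d23 * p * A2 * A3) <= D * n * m - lo2 - lo3.
Proof.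
move=> e_gt0 e_le dl_gt0 dl_le p_gt0 A2_gt0 A3_gt0 n_ge n_le m_ge m_le D_ge D_le
  k2_ge0 k2_le lo2_ge lo2_le k3_ge0 k3_le lo3_ge lo3_le.
have loss2 := one_side_loss_unscaled e_gt0 e_le dl_gt0 dl_le p_gt0 A2_gt0 A3_gt0
  n_ge n_le m_ge m_le D_ge D_le k2_ge0 k2_le lo2_ge lo2_le.
have lo3_le' : lo3 <= k3 * (D + e * p) * n + 2 * e * (e * p) * m * n.
  by apply: le_trans lo3_le (ler_eq _); ring.
have loss3 := one_side_loss_unscaled e_gt0 e_le dl_gt0 dl_le p_gt0 A3_gt0 A2_gt0
  m_ge m_le n_ge n_le D_ge D_le k3_ge0 k3_le lo3_ge lo3_le'.
rewrite [A3 * A2]mulrC in loss3.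
have /andP[w_ge _] := scaled_bounds e_gt0 A2_gt0 n_ge n_le.
have /andP[u_ge _] := scaled_bounds e_gt0 A3_gt0 m_ge m_le.
have dpAA_gt0 : 0 < d23 * p * A2 * A3 by rewrite !mulr_gt0 //; lra.
have := ler_wpM2r (ltW dpAA_gt0) (two_side_loss e_gt0 e_le u_ge w_ge loss2 loss3).
move=> loss; apply: le_trans (le_trans (ler_eq _) loss) (ler_eq _).
  by field; rewrite !gt_eqF //; lra.
by rewrite /scaled; field; rewrite !gt_eqF //; lra.
Qed.

End CleaningLoss.

Lemma threshold_ge (R : realFieldType) (eps delta p d23 D A m : R) :
  0 < eps -> 0 < delta -> delta <= d23 -> 0 < p -> 0 < A -> 0 <= m ->
  m <= (1 + eps) * A -> 0 <= D -> D <= (1 + eps) * (d23 * p) ->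
  (D + eps * p) * m <= (1 + 2 * eps / delta) * (1 + eps) ^+ 2 * d23 * p * A.
Proof.
move=> eps_gt0 delta_gt0 delta_le p_gt0 A_gt0 m_ge0 m_le D_ge0 D_le.
have : (D + eps * p) * m <= ((1 + eps) * (d23 * p) + eps * p) * ((1 + eps) * A).
  by apply: ler_pM => //; [apply: addr_ge0 => //; apply: mulr_ge0 | ]; lra.
move/le_trans; apply.
set q := d23 / delta.
have q_ge1 : 1 <= q by rewrite /q ler_pdivlMr // mul1r.
have -> : (1 + 2 * eps / delta) * (1 + eps) ^+ 2 * d23 * p * A =
    ((1 + eps) * (d23 * p) + eps * p) * ((1 + eps) * A)
    + (1 + eps) * p * A * eps * (2 * q * (1 + eps) - 1).
  by rewrite /q; field; rewrite gt_eqF.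
rewrite lerDl; apply: mulr_ge0; first by rewrite !mulr_ge0 //; lra.
suff : 1 <= q * (1 + eps) by lra.
by rewrite -[1]mulr1; apply: ler_pM; lra.
Qed.

Section EdgeCounting.
Variables (T : finType) (e : rel T).
Implicit Types X Y B : {set T}.

Definition deg Y (x : T) : nat := #|nbhd e x :&: Y|.

Lemma edges_between_dsum X Y :
  edges_between e X Y = (\sum_(x in X) \sum_(y in Y) (e x y : nat))%N.
Proof.
rewrite /edges_between -sum1_card.
rewrite (eq_bigl (fun xy : T * T => (xy.1 \in X) && ((xy.2 \in Y) && e xy.1 xy.2))); last first.
  by case=> x y; rewrite !inE /= andbA.
rewrite -(pair_big_dep (fun x => x \in X) (fun x y => (y \in Y) && e x y) (fun _ _ => 1%N)) /=.
apply: eq_bigr => x _; rewrite big_mkcondr /=; apply: eq_bigr => y _.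
by case: (e x y).
Qed.

Lemma deg_sum Y x : deg Y x = (\sum_(y in Y) (e x y : nat))%N.
Proof.
rewrite /deg -sum1_card big_mkcond /= [RHS]big_mkcond /=; apply: eq_bigr => y _.
by rewrite !inE; case: (e x y); case: (y \in Y).
Qed.

Lemma edges_between_deg X Y : edges_between e X Y = (\sum_(x in X) deg Y x)%N.
Proof. by rewrite edges_between_dsum; apply: eq_bigr => x _; rewrite deg_sum. Qed.

Lemma edges_betweenC X Y : symmetric e -> edges_between e X Y = edges_between e Y X.
Proof.
move=> e_sym; rewrite !edges_between_dsum exchange_big /=.
by apply: eq_bigr => y _; apply: eq_bigr => x _; rewrite e_sym.
Qed.

Lemma edges_betweenUl X1 X2 Y : [disjoint X1 & X2] ->
  edges_between e (X1 :|: X2) Y = (edges_between e X1 Y + edges_between e X2 Y)%N.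
Proof.
move=> X12; rewrite !edges_between_deg (big_setID (A := X1 :|: X2) X1); congr addn.
  by apply: eq_bigl => x; rewrite !inE; case: (x \in X1); case: (x \in X2).
apply: eq_bigl => x; rewrite !inE; case X1x: (x \in X1) => //=.
by rewrite (disjointFr X12 X1x).
Qed.

Lemma edges_betweenDl X B Y : B \subset X ->
  edges_between e X Y = (edges_between e B Y + edges_between e (X :\: B) Y)%N.
Proof. by move=> BX; rewrite !edges_between_deg (big_setID (A := X) B) (setIidPr BX). Qed.

Lemma edges_between_subr X Y1 Y2 : Y1 \subset Y2 ->
  (edges_between e X Y1 <= edges_between e X Y2)%N.
Proof.
move=> Y12; rewrite !edges_between_deg; apply: leq_sum => x _.
exact/subset_leq_card/setIS.
Qed.

Lemma edges_between_le_remove X Y B2 B3 : symmetric e -> B2 \subset X -> B3 \subset Y ->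
  (edges_between e X Y <= edges_between e B2 Y + edges_between e B3 X
                          + edges_between e (X :\: B2) (Y :\: B3))%N.
Proof.
move=> e_sym B2X B3Y; rewrite (edges_betweenDl Y B2X) -addnA leq_add2l.
rewrite edges_betweenC // (edges_betweenDl _ B3Y).
by apply: leq_add; [exact/edges_between_subr/subsetDl | rewrite edges_betweenC].
Qed.

Lemma exists_subset_card (C : {set T}) k : (k <= #|C|)%N ->
  exists2 S : {set T}, S \subset C & #|S| = k.
Proof.
move=> /card_geqP [s [s_uniq s_size sC]]; exists [set x in s].
  by apply/subsetP => x; rewrite inE => /sC.
by rewrite cardsE (card_uniqP s_uniq) s_size.
Qed.

End EdgeCounting.

Section Averaging.
Variables (R : numDomainType) (T : finType) (e : rel T).

Lemma edges_between_natr (X Y : {set T}) :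
  (edges_between e X Y)%:R = \sum_(x in X) ((deg e Y x)%:R : R).
Proof. by rewrite edges_between_deg natr_sum. Qed.

Lemma card_mul_le_sum (A : {set T}) (F : T -> R) (c : R) :
  (forall x, x \in A -> c <= F x) -> #|A|%:R * c <= \sum_(x in A) F x.
Proof. by move=> cF; rewrite mulr_natl -sumr_const; apply: ler_sum. Qed.

Lemma sum_lt_card_mul (A : {set T}) (F : T -> R) (c : R) : (0 < #|A|)%N ->
  (forall x, x \in A -> F x < c) -> \sum_(x in A) F x < #|A|%:R * c.
Proof.
move=> /card_gt0P [x0 x0A] Fc; rewrite mulr_natl -sumr_const; apply: ltr_sum => //.
by apply/hasP; exists x0; rewrite ?mem_index_enum.
Qed.

Lemma card_mul_lt_sum (A : {set T}) (F : T -> R) (c : R) : (0 < #|A|)%N ->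
  (forall x, x \in A -> c < F x) -> #|A|%:R * c < \sum_(x in A) F x.
Proof.
move=> /card_gt0P [x0 x0A] cF; rewrite mulr_natl -sumr_const; apply: ltr_sum => //.
by apply/hasP; exists x0; rewrite ?mem_index_enum.
Qed.

End Averaging.

Lemma exists_nat_ceil (R : realFieldType) (a : R) (N : nat) : 0 < a -> a <= N%:R ->
  exists K : nat, [/\ (1 <= K)%N, a <= K%:R & K.-1%:R < a].
Proof.
move=> a_gt0 a_le; have exK : exists K : nat, a <= K%:R by exists N.
case: (ex_minnP exK) => K a_leK K_min; exists K; split => //.
  by rewrite lt0n; apply/negP => /eqP K0; move: a_leK; rewrite K0; lra.
rewrite ltNge; apply/negP => /K_min; case: (K) a_leK => [|K'] /=; first lra.
by rewrite ltnn.
Qed.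

Section HighDegree.
Variables (R : realFieldType) (T : finType) (e : rel T) (X Y : {set T}) (eps eta D : R).
Hypothesis X_reg : forall X' : {set T}, X' \subset X -> eps * #|X|%:R <= #|X'|%:R ->
  `|D - density e X' Y| <= eta.

Definition high_deg_set (tau : R) := [set x in X | tau < (deg e Y x)%:R].
Definition low_deg_set := [set x in X | (deg e Y x)%:R < (D - eta) * #|Y|%:R].

Lemma high_deg_set_sub tau : high_deg_set tau \subset X.
Proof. by apply/subsetP => x; rewrite inE => /andP[]. Qed.

Lemma low_deg_set_sub : low_deg_set \subset X.
Proof. by apply/subsetP => x; rewrite inE => /andP[]. Qed.

Lemma edges_between_close (X' : {set T}) : 0 < eps * #|X|%:R -> (0 < #|Y|)%N ->
  X' \subset X -> eps * #|X|%:R <= #|X'|%:R ->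
  (D - eta) * #|X'|%:R * #|Y|%:R <= (edges_between e X' Y)%:R /\
  (edges_between e X' Y)%:R <= (D + eta) * #|X'|%:R * #|Y|%:R.
Proof.
move=> epsX_gt0 Y_gt0 X'X X'_ge.
have X'_gt0 : (0 : R) < #|X'|%:R by apply: lt_le_trans X'_ge.
have X'Y_gt0 : (0 : R) < #|X'|%:R * #|Y|%:R by apply: mulr_gt0 => //; rewrite ltr0n.
have := X_reg X'X X'_ge; rewrite /density natrM => /ler_normlP [lo hi].
split.
  have : D - eta <= (edges_between e X' Y)%:R / (#|X'|%:R * #|Y|%:R) by lra.
  by rewrite ler_pdivlMr // mulrA.
have : (edges_between e X' Y)%:R / (#|X'|%:R * #|Y|%:R) <= D + eta by lra.
by rewrite ler_pdivrMr // mulrA.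
Qed.

Lemma high_deg_edges_ge tau :
  #|high_deg_set tau|%:R * tau <= (edges_between e (high_deg_set tau) Y)%:R.
Proof.
by rewrite edges_between_natr; apply: card_mul_le_sum => x; rewrite inE => /andP[_ /ltW].
Qed.

Lemma card_high_deg_le tau : 0 < eps -> (0 < #|X|)%N -> (0 < #|Y|)%N ->
  (D + eta) * #|Y|%:R <= tau -> #|high_deg_set tau|%:R <= eps * #|X|%:R.
Proof.
move=> eps_gt0 X_gt0 Y_gt0 tau_ge; rewrite leNgt; apply/negP => big.
have epsX_gt0 : 0 < eps * #|X|%:R by apply: mulr_gt0 => //; rewrite ltr0n.
have B_gt0 : (0 < #|high_deg_set tau|)%N by rewrite -(ltr0n R); apply: lt_trans big.
have [_ hi] := edges_between_close epsX_gt0 Y_gt0 (high_deg_set_sub tau) (ltW big).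
have : #|high_deg_set tau|%:R * tau < (edges_between e (high_deg_set tau) Y)%:R.
  by rewrite edges_between_natr; apply: card_mul_lt_sum => // x; rewrite inE => /andP[].
have : (D + eta) * #|high_deg_set tau|%:R * #|Y|%:R <= #|high_deg_set tau|%:R * tau.
  by rewrite mulrAC [_ * tau]mulrC; apply: ler_wpM2r.
lra.
Qed.

Lemma card_low_deg_lt : 0 < eps -> (0 < #|X|)%N -> (0 < #|Y|)%N ->
  #|low_deg_set|%:R < eps * #|X|%:R.
Proof.
move=> eps_gt0 X_gt0 Y_gt0; rewrite ltNge; apply/negP => big.
have epsX_gt0 : 0 < eps * #|X|%:R by apply: mulr_gt0 => //; rewrite ltr0n.
have L_gt0 : (0 < #|low_deg_set|)%N by rewrite -(ltr0n R); apply: lt_le_trans big.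
have [lo _] := edges_between_close epsX_gt0 Y_gt0 low_deg_set_sub big.
have : (edges_between e low_deg_set Y)%:R < #|low_deg_set|%:R * ((D - eta) * #|Y|%:R).
  by rewrite edges_between_natr; apply: sum_lt_card_mul => // x; rewrite inE => /andP[].
rewrite mulrA [_ * (D - eta)]mulrC; lra.
Qed.

(* Pad the high-degree set [B] with vertices of [X] that have neither high nor low
   degree up to the least size [K >= eps |X|] at which regularity applies; the upper
   bound on the padded set minus the lower bound on the padding bounds [e(B, Y)]. *)
Lemma high_deg_edges_le tau : 0 < eps -> eps < 1/2 -> 0 <= eta ->
  (0 < #|X|)%N -> (0 < #|Y|)%N -> (D + eta) * #|Y|%:R <= tau ->
  (edges_between e (high_deg_set tau) Y)%:R
    <= #|high_deg_set tau|%:R * (D + eta) * #|Y|%:R + 2 * eps * eta * #|X|%:R * #|Y|%:R.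
Proof.
move=> eps_gt0 eps_lt eta_ge0 X_gt0 Y_gt0 tau_ge.
set B := high_deg_set tau; set n := #|X|; set m := #|Y|; set k := #|B|.
have n_gt0 : (0 : R) < n%:R by rewrite ltr0n.
have epsn_gt0 : 0 < eps * n%:R by apply: mulr_gt0.
have slack_ge0 : 0 <= 2 * eps * eta * n%:R * m%:R by rewrite !mulr_ge0 //; lra.
have [k0 | k_gt0] := posnP k.
  have -> : B = set0 by apply/eqP; rewrite -cards_eq0 -/k k0.
  by rewrite edges_between_natr big_set0 k0 !mul0r add0r.
have [K [K_ge1 epsn_le ltK]] : exists K : nat, [/\ (1 <= K)%N, eps * n%:R <= K%:R & K.-1%:R < eps * n%:R].
  apply: exists_nat_ceil => //; rewrite -[leRHS]mul1r.
  by apply: ler_wpM2r; [exact: ler0n | lra].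
have kK : (k <= K)%N by rewrite -(ler_nat R); apply: le_trans epsn_le; apply: card_high_deg_le.
have LK : (#|low_deg_set| + K <= n)%N.
  suff : (#|low_deg_set| + K.-1 < n)%N by lia.
  by rewrite -(ltr_nat R) natrD; have := card_low_deg_lt eps_gt0 X_gt0 Y_gt0; nra.
have [S SC cardS] : exists2 S : {set T}, S \subset X :\: (B :|: low_deg_set) & #|S| = (K - k)%N.
  apply: exists_subset_card; rewrite cardsD.
  have : (#|X :&: (B :|: low_deg_set)| <= k + #|low_deg_set|)%N.
    by apply: leq_trans (subset_leq_card (subsetIr _ _)) _; rewrite cardsU leq_subr.
  lia.
have BS : [disjoint B & S].
  rewrite -setI_eq0; apply/eqP/setP => x; rewrite !inE.
  by apply/negP => /andP[xB /(subsetP SC)]; rewrite !inE xB.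
have BS_X : B :|: S \subset X.
  by rewrite subUset high_deg_set_sub (subset_trans SC) ?subsetDl.
have cardBS : #|B :|: S| = K by rewrite cardsU (disjoint_setI0 BS) cards0 subn0 cardS subnKC.
have BS_big : eps * n%:R <= #|B :|: S|%:R by rewrite cardBS.
have [_ hi] := edges_between_close epsn_gt0 Y_gt0 BS_X BS_big.
rewrite cardBS edges_betweenUl // natrD in hi.
have S_lo : (K - k)%:R * ((D - eta) * m%:R) <= (edges_between e S Y)%:R.
  rewrite -cardS edges_between_natr; apply: card_mul_le_sum => x /(subsetP SC).
  rewrite in_setD in_setU negb_or => /andP[/andP[_ xL] xX].
  by move: xL; rewrite inE xX /= -leNgt.
rewrite natrB // in S_lo.
have K_le : K%:R <= eps * n%:R + k%:R :> R.
  have : 1 <= k%:R :> R by rewrite ler1n.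
  by case: (K) K_ge1 ltK => // K' _ /=; rewrite -natr1; lra.
have : 2 * eta * K%:R * m%:R <= 2 * eta * (eps * n%:R + k%:R) * m%:R.
  by apply: ler_wpM2r; [exact: ler0n | apply: ler_wpM2l => //; lra].
nra.
Qed.

End HighDegree.

Section Pairs.
Variables (R : realFieldType) (T : finType) (e : rel T).
Implicit Types X Y : {set T}.

Lemma densityC X Y : symmetric e -> density e X Y = density e Y X :> R.
Proof. by move=> e_sym; rewrite /density edges_betweenC // mulnC. Qed.

Lemma density_gt0_card X Y : 0 < density e X Y :> R -> (0 < #|X|)%N /\ (0 < #|Y|)%N.
Proof.
rewrite /density; case: (posnP #|X|) => [-> | X_gt0]; first by rewrite mul0n invr0 mulr0 ltxx.
by case: (posnP #|Y|) => [-> | //]; rewrite muln0 invr0 mulr0 ltxx.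
Qed.

Lemma regular_pair_left (eps p : R) X Y : eps <= 1 -> regular_pair e eps p X Y ->
  forall X', X' \subset X -> eps * #|X|%:R <= #|X'|%:R ->
  `|density e X Y - density e X' Y| <= eps * p.
Proof.
move=> eps_le1 XY_reg X' X'X X'_ge; apply: XY_reg => //.
by rewrite -[leRHS]mul1r; apply: ler_wpM2r.
Qed.

Lemma regular_pairC (eps p : R) X Y : symmetric e ->
  regular_pair e eps p X Y -> regular_pair e eps p Y X.
Proof.
move=> e_sym XY_reg Y' X' Y'Y X'X Y'_ge X'_ge.
by rewrite (densityC Y X e_sym) (densityC Y' X' e_sym); exact: XY_reg.
Qed.

Lemma regular_pair_right (eps p : R) X Y : symmetric e -> eps <= 1 ->
  regular_pair e eps p X Y ->
  forall Y', Y' \subset Y -> eps * #|Y|%:R <= #|Y'|%:R ->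
  `|density e X Y - density e Y' X| <= eps * p.
Proof.
move=> e_sym eps_le1 /(regular_pairC e_sym) YX_reg.
by rewrite densityC //; exact: regular_pair_left.
Qed.

Lemma deg_high_deg_setD X Y Y' (tau : R) x : Y' \subset Y ->
  x \in X :\: high_deg_set e X Y tau -> (deg e Y' x)%:R <= tau.
Proof.
move=> Y'Y; rewrite !inE negb_and => /andP[/orP[/negP // | ]].
rewrite -leNgt => /[swap] _; apply: le_trans.
by rewrite ler_nat; apply/subset_leq_card/setIS.
Qed.

Lemma edges_between_le_good (eps p d12 d13 : R) (V1 V2 V3 N2 N3 X Y : {set T}) :
  X \subset N2 -> Y \subset N3 ->
  (edges_between e X Y <= good_edges_between e eps p d12 d13 V1 V2 V3 X Y
     + #|[set xy in setX N2 N3 | e xy.1 xy.2 &&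
                                 ~~ good_edge e eps p d12 d13 V1 V2 V3 xy.1 xy.2]|)%N.
Proof.
move=> XN2 YN3; apply: leq_trans (leq_card_setU _ _); apply: subset_leq_card.
apply/subsetP => -[x y]; rewrite !inE /= => /andP[/andP[xX yY] xy].
rewrite xX yY xy (subsetP XN2 x xX) (subsetP YN3 y yY) /=.
by case: good_edge.
Qed.

End Pairs.

Lemma part_bounds (R : realFieldType) (T : finType) (eps A : R) (N X : {set T}) :
  0 < eps -> eps <= 1 -> approx #|N|%:R eps A -> X \subset N ->
  (1 - eps) * #|N|%:R <= #|X|%:R -> (0 < #|X|)%N ->
  [/\ 0 < A, (1 - eps) ^+ 2 * A <= #|X|%:R & #|X|%:R <= (1 + eps) * A].
Proof.
move=> eps_gt0 eps_le1 /andP[N_ge N_le] XN X_ge X_gt0.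
have XN' : #|X|%:R <= #|N|%:R :> R by rewrite ler_nat; exact: subset_leq_card.
have X_gt0' : (0 : R) < #|X|%:R by rewrite ltr0n.
have A_gt0 : 0 < A by nra.
by split => //; nra.
Qed.

Lemma cleaned_edges_ge (R : realFieldType) (T : finType) (e : rel T)
    (eps delta p d23 A2 A3 tau2 tau3 : R) (N2 N3 X Y : {set T}) :
  symmetric e -> 0 < eps -> eps < 1/2 -> 0 < delta -> delta <= d23 -> 0 < p ->
  approx #|N2|%:R eps A2 -> approx #|N3|%:R eps A3 ->
  X \subset N2 -> Y \subset N3 ->
  (1 - eps) * #|N2|%:R <= #|X|%:R -> (1 - eps) * #|N3|%:R <= #|Y|%:R ->
  regular_pair e eps p X Y -> approx (density e X Y) eps (d23 * p) ->
  tau2 = (1 + 2 * eps / delta) * (1 + eps) ^+ 2 * d23 * p * A3 ->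
  tau3 = (1 + 2 * eps / delta) * (1 + eps) ^+ 2 * d23 * p * A2 ->
  (1 - 5 * eps - 2 * eps / delta) * (d23 * p * A2 * A3)
    <= (edges_between e (X :\: high_deg_set e X Y tau2) (Y :\: high_deg_set e Y X tau3))%:R.
Proof.
move=> e_sym eps_gt0 eps_lt delta_gt0 delta_le p_gt0 N2_approx N3_approx
  XN2 YN3 X_ge Y_ge XY_reg /andP[D_ge D_le] tau2E tau3E.
set D := density e X Y in XY_reg D_ge D_le *; set n := #|X|; set m := #|Y|.
have [eps_big | eps_small] := ltrP (1/5) eps.
  apply: le_trans (ler0n _ _); apply: mulr_le0_ge0.
    have : 0 <= 2 * eps / delta by apply: divr_ge0; lra.
    lra.
  have A2_ge0 : 0 <= A2 by case/andP: N2_approx => _; have := ler0n R #|N2|; nra.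
  have A3_ge0 : 0 <= A3 by case/andP: N3_approx => _; have := ler0n R #|N3|; nra.
  by rewrite !mulr_ge0 //; lra.
have eps_le1 : eps <= 1 by lra.
have D_gt0 : 0 < D by nra.
have [X_gt0 Y_gt0] := density_gt0_card D_gt0.
have [A2_gt0 n_ge n_le] := part_bounds eps_gt0 eps_le1 N2_approx XN2 X_ge X_gt0.
have [A3_gt0 m_ge m_le] := part_bounds eps_gt0 eps_le1 N3_approx YN3 Y_ge Y_gt0.
have eta_ge0 : 0 <= eps * p by apply: mulr_ge0; lra.
have Xreg := regular_pair_left eps_le1 XY_reg.
have Yreg := regular_pair_right e_sym eps_le1 XY_reg.
have tau2_ge : (D + eps * p) * m%:R <= tau2.
  by rewrite tau2E; apply: threshold_ge => //; lra.
have tau3_ge : (D + eps * p) * n%:R <= tau3.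
  by rewrite tau3E; apply: threshold_ge => //; lra.
have k2_le := card_high_deg_le Xreg eps_gt0 X_gt0 Y_gt0 tau2_ge.
have k3_le := card_high_deg_le Yreg eps_gt0 Y_gt0 X_gt0 tau3_ge.
have lo2_ge := high_deg_edges_ge e X Y tau2; rewrite {2}tau2E in lo2_ge.
have lo3_ge := high_deg_edges_ge e Y X tau3; rewrite {2}tau3E in lo3_ge.
have lo2_le := high_deg_edges_le Xreg eps_gt0 eps_lt eta_ge0 X_gt0 Y_gt0 tau2_ge.
have lo3_le := high_deg_edges_le Yreg eps_gt0 eps_lt eta_ge0 Y_gt0 X_gt0 tau3_ge.
rewrite [_ * m%:R * n%:R]mulrAC in lo3_le.
have := cleaning_loss_le eps_gt0 eps_small delta_gt0 delta_le p_gt0 A2_gt0 A3_gt0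
  n_ge n_le m_ge m_le D_ge D_le (ler0n _ _) k2_le lo2_ge lo2_le (ler0n _ _) k3_le lo3_ge lo3_le.
have := edges_between_le_remove e_sym (high_deg_set_sub e X Y tau2) (high_deg_set_sub e Y X tau3); rewrite -(ler_nat R) !natrD.
have -> : (edges_between e X Y)%:R = D * n%:R * m%:R.
  by rewrite /D /density natrM; field; rewrite !gt_eqF ?ltr0n.
lra.
Qed.

Theorem proposition2p14 (R : realFieldType) (T : finType) (e : rel T)
  (e_sym : symmetric e) (e_irr : irreflexive e)
  (eps delta p : R) (V1 V2 V3 : {set T}) (d12 d13 d23 : R) :
  0 < eps -> 0 < delta -> 0 < p -> eps < 1 / 2 ->
  [disjoint V1 & V2] -> [disjoint V1 & V3] -> [disjoint V2 & V3] ->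
  density e V1 V2 = d12 * p -> density e V1 V3 = d13 * p ->
  density e V2 V3 = d23 * p ->
  delta <= d12 -> delta <= d13 -> delta <= d23 ->
  forall v : T, v \in V1 -> typical e eps p d12 d13 d23 V2 V3 v ->
  exists N2 N3 : {set T},
    [/\ N2 \subset nbhd e v :&: V2, N3 \subset nbhd e v :&: V3,
        (* (i) *)
        (1 - 6%:R * eps - 2%:R * eps / delta) * d12 * d13 * d23 * p ^+ 3
          * #|V2|%:R * #|V3|%:R <= (edges_between e N2 N3)%:R,
        (good_vertex e eps p d12 d13 d23 V1 V2 V3 v ->
          (1 - 6%:R * eps - 2%:R * eps / delta) * d12 * d13 * d23 * p ^+ 3
            * #|V2|%:R * #|V3|%:R
          <= (good_edges_between e eps p d12 d13 V1 V2 V3 N2 N3)%:R) &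
        (* (ii) *)
        ((forall x, x \in N2 ->
          #|nbhd e x :&: N3|%:R <=
            (1 + 2%:R * eps / delta) * (1 + eps) ^+ 2 * d13 * d23 * p ^+ 2 * #|V3|%:R) /\
        (forall y, y \in N3 ->
          #|nbhd e y :&: N2|%:R <=
            (1 + 2%:R * eps / delta) * (1 + eps) ^+ 2 * d12 * d23 * p ^+ 2 * #|V2|%:R))].
Proof.
move=> eps_gt0 delta_gt0 p_gt0 eps_lt _ _ _ _ _ _ d12_ge d13_ge d23_ge v _
  [N2_approx [N3_approx [X [Y [XN2 YN3 X_ge Y_ge [XY_reg D_approx]]]]]].
set A2 := d12 * p * #|V2|%:R; set A3 := d13 * p * #|V3|%:R.
set tau2 := (1 + 2%:R * eps / delta) * (1 + eps) ^+ 2 * d13 * d23 * p ^+ 2 * #|V3|%:R.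
set tau3 := (1 + 2%:R * eps / delta) * (1 + eps) ^+ 2 * d12 * d23 * p ^+ 2 * #|V2|%:R.
have tau2E : tau2 = (1 + 2 * eps / delta) * (1 + eps) ^+ 2 * d23 * p * A3.
  by rewrite /tau2 /A3; ring.
have tau3E : tau3 = (1 + 2 * eps / delta) * (1 + eps) ^+ 2 * d23 * p * A2.
  by rewrite /tau3 /A2; ring.
have edges_ge := cleaned_edges_ge e_sym eps_gt0 eps_lt delta_gt0 d23_ge p_gt0
  N2_approx N3_approx XN2 YN3 X_ge Y_ge XY_reg D_approx tau2E tau3E.
set bound := _ * d12 * d13 * d23 * p ^+ 3 * #|V2|%:R * #|V3|%:R.
set DD := d23 * p * A2 * A3 in edges_ge *.
have boundE : bound = (1 - 5 * eps - 2 * eps / delta) * DD - eps * DD.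
  by rewrite /bound /DD /A2 /A3; ring.
have epsDD_ge0 : 0 <= eps * DD by rewrite /DD /A2 /A3 !mulr_ge0 ?ler0n //; lra.
have X'N2 := subset_trans (subsetDl X (high_deg_set e X Y tau2)) XN2.
have Y'N3 := subset_trans (subsetDl Y (high_deg_set e Y X tau3)) YN3.
exists (X :\: high_deg_set e X Y tau2), (Y :\: high_deg_set e Y X tau3); split => //.
- by move: edges_ge; rewrite boundE; lra.
- move=> [_ bad_le]; rewrite boundE.
  have := edges_between_le_good e eps p d12 d13 V1 V2 V3 X'N2 Y'N3.
  rewrite -(ler_nat R) natrD; move: bad_le edges_ge.
  have -> : eps * d12 * d13 * d23 * p ^+ 3 * #|V2|%:R * #|V3|%:R = eps * DD.
    by rewrite /DD /A2 /A3; ring.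
  lra.
- by split=> x /deg_high_deg_setD; apply; exact: subsetDl.
Qed.
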